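(* There is no finite saturated Nmatrix $\mathbb{M}$ such that $\vdash_{\mathbb{M}}=\vdash_{\diamond}$.
   Context: $\vdash_\diamond$ is the single-conclusion logic of the two-valued Nmatrix $\langle\{0,1\},\cdot,\{1\}\rangle$ with one binary connective $\diamond$ (platypus) interpreted by $\diamond(0,0)=\{0\}$, $\diamond(1,1)=\{1\}$, $\diamond(0,1)=\diamond(1,0)=\{0,1\}$. For an Nmatrix $\mathbb{M}=\langle V,\cdot_{\mathbb{M}},D\rangle$, $\rhd_{\mathbb{M}}$ is its multiple-conclusion logic ($\Gamma\rhd_{\mathbb{M}}\Delta$ iff every $\mathbb{M}$-valuation with $v(\Gamma)\subseteq D$ has $v(\Delta)\cap D\neq\emptyset$) and $\vdash_{\mathbb{M}}$ its single-conclusion fragment. $\mathbb{M}$ is saturated if for every $\vdash_{\mathbb{M}}$-theory $\Gamma$ there is an $\mathbb{M}$-valuation $v$ with $v(\psi)\in D$ iff $\psi\in\Gamma$; equivalently, if $\Gamma\not\vdash_{\mathbb{M}}\psi$ for every $\psi\in\Delta$ then $\Gamma\not\rhd_{\mathbb{M}}\Delta$. *)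

From mathcomp Require Import all_boot.

Set Implicit Arguments.
Unset Strict Implicit.
Unset Printing Implicit Defensive.

Inductive Fm : Type :=
| Var : nat -> Fm
| Dia : Fm -> Fm -> Fm.

Definition fset := Fm -> Prop.

(* An Nmatrix <V, ._M, D> for the signature with one binary connective:
   [dia a b c] means c is in the (nonempty) set diamond_M(a, b). *)
Record Nmatrix (V : Type) := {
  dia : V -> V -> V -> Prop;
  dia_nonempty : forall a b, exists c, dia a b c;
  desig : V -> Prop
}.

Definition valuation (V : Type) (M : Nmatrix V) (v : Fm -> V) : Prop :=
  forall a b, dia M (v a) (v b) (v (Dia a b)).

Definition cons1 (V : Type) (M : Nmatrix V) (G : fset) (psi : Fm) : Prop :=
  forall v, valuation M v ->
    (forall g, G g -> desig M (v g)) -> desig M (v psi).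

Definition consm (V : Type) (M : Nmatrix V) (G D : fset) : Prop :=
  forall v, valuation M v ->
    (forall g, G g -> desig M (v g)) -> exists d, D d /\ desig M (v d).

Definition theory (V : Type) (M : Nmatrix V) (G : fset) : Prop :=
  forall psi, cons1 M G psi -> G psi.

Definition saturated (V : Type) (M : Nmatrix V) : Prop :=
  forall G, theory M G ->
    exists v, valuation M v /\ forall psi, desig M (v psi) <-> G psi.

(* The platypus Nmatrix <{0,1}, ., {1}>:
   dia(0,0) = {0}, dia(1,1) = {1}, dia(0,1) = dia(1,0) = {0,1}. *)
Definition platypus_dia (a b c : bool) : Prop := a = b -> c = a.

Lemma platypus_dia_nonempty : forall a b, exists c, platypus_dia a b c.
Proof. by move=> a b; exists a. Qed.

Definition platypus : Nmatrix bool :=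
  {| dia := platypus_dia; dia_nonempty := platypus_dia_nonempty;
     desig := fun b => b = true |}.

Definition cons_platypus (G : fset) (psi : Fm) : Prop := cons1 platypus G psi.

From mathcomp Require Import all_boot.
From Stdlib Require Import ClassicalEpsilon.

Set Implicit Arguments.
Unset Strict Implicit.
Unset Printing Implicit Defensive.

(* The rule p ◇ p |- p holds for the platypus, so an Nmatrix M with the same
   single-conclusion logic designates x whenever it designates some element
   of x ◇ x.  Let T be the consequences of the formulas p_i ◇ p_j (i <> j) over
   #|V| + 1 variables; no variable lies in T.  Saturation yields a valuation v
   designating exactly T; by pigeonhole v p_i = v p_j for some i <> j, and as
   v (p_i ◇ p_j) is designated, so is v p_i, i.e. p_i lies in T. *)

Section Valuations.
Variables (V : Type) (M : Nmatrix V).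

Fixpoint eval (c : V -> V -> V) (e : nat -> V) (f : Fm) : V :=
  match f with
  | Var i => e i
  | Dia a b => c (eval c e a) (eval c e b)
  end.

Lemma eval_valuation c e :
  (forall a b, dia M a b (c a b)) -> valuation M (eval c e).
Proof. by move=> cP a b; apply: cP. Qed.

Lemma cons1_theory G : theory M (cons1 M G).
Proof. by move=> psi Hpsi v Hv HG; apply: Hpsi => // g; apply; [apply: Hv|]. Qed.

End Valuations.

Lemma dia_choice_through (V : eqType) (M : Nmatrix V) x z :
  dia M x x z -> exists c, (forall a b, dia M a b (c a b)) /\ c x x = z.
Proof.
move=> xxz.
pose pick a b := proj1_sig (constructive_indefinite_description _ (dia_nonempty M a b)).
exists (fun a b => if (a == x) && (b == x) then z else pick a b); split; last by rewrite eqxx.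
move=> a b; case: eqP => [->|_]; case: eqP => [->|_] //=;
  exact: proj2_sig (constructive_indefinite_description _ _).
Qed.

Lemma desig_of_dia_diag (V : eqType) (M : Nmatrix V) x z :
  cons1 M (fun g => g = Dia (Var 0) (Var 0)) (Var 0) ->
  dia M x x z -> desig M z -> desig M x.
Proof.
move=> rule /dia_choice_through [c [cP cxx]] Dz.
by apply: (rule _ (eval_valuation (fun=> x) cP)) => g -> /=; rewrite cxx.
Qed.

Lemma platypus_idempotent_rule :
  cons_platypus (fun g => g = Dia (Var 0) (Var 0)) (Var 0).
Proof.
move=> v vval vG; have := vval (Var 0) (Var 0).
by rewrite /= /platypus_dia -(vG _ erefl) => ->.
Qed.

Definition distinct_pairs (n : nat) : fset :=
  fun g => exists (i j : 'I_n), i != j /\ g = Dia (Var i) (Var j).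

Fixpoint has_var_neq (i : nat) (f : Fm) : bool :=
  match f with
  | Var m => m != i
  | Dia a b => has_var_neq i a || has_var_neq i b
  end.

Lemma has_var_neq_valuation i : valuation platypus (has_var_neq i).
Proof. by move=> a b /=; rewrite /platypus_dia => ->; rewrite orbb. Qed.

Lemma platypus_distinct_pairs_var n i : ~ cons_platypus (distinct_pairs n) (Var i).
Proof.
move=> Hi; have /negP : ~~ has_var_neq i (Var i) by rewrite /= eqxx.
apply; apply: Hi (has_var_neq_valuation (i := i)) _ => _ [j [k [jk ->]]] /=.
by case: eqP => [ji|] //=; case: eqP => //= ki; move: jk; rewrite -val_eqE /= ji ki eqxx.
Qed.

Lemma ord_collision (T : finType) (f : 'I_#|T|.+1 -> T) :
  exists i, exists2 j, i != j & f i = f j.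
Proof.
apply/injectivePn/injectiveP => f_inj.
by have := leq_card f f_inj; rewrite card_ord ltnn.
Qed.

Theorem proposition5 :
  ~ exists (V : finType) (M : Nmatrix V),
      saturated M /\
      (forall (G : fset) (psi : Fm), cons1 M G psi <-> cons_platypus G psi).
Proof.
move=> [V [M [satM sameM]]].
have [v [vval vT]] := satM _ (cons1_theory (G := distinct_pairs #|V|.+1)).
have undesig i : ~ desig M (v (Var i)).
  by move/vT/sameM; apply: platypus_distinct_pairs_var.
have [i [j ij vij]] := ord_collision (fun i => v (Var i)).
apply: (undesig i) (desig_of_dia_diag _ (z := v (Dia (Var i) (Var j))) _ _).
- exact/sameM/platypus_idempotent_rule.
- by have := vval (Var i) (Var j); rewrite vij.
- by apply/vT => w _; apply; exists i, j.
Qed.
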